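(* Assume $\sum_{i=1}^{+\infty}\sqrt{\sigma_i}\,\|G_i\|_\infty<+\infty$ and let $\beta_G=\|G_0\|_\infty+\sum_{i=1}^{+\infty}\sqrt{\sigma_i}\|G_i\|_\infty|\eta_i|$ (a second-order positive random variable). Then for all $\mathbf{x}\in D$, $\|\mathbf{K}(\mathbf{x})\|_F\le\beta<+\infty$ almost surely, where $\beta$ is a positive-valued random variable independent of $\mathbf{x}$, as follows. (i) (Exponential type) If $[\mathbf{K}(\mathbf{x})]=\frac{1}{1+\varepsilon}[\underline L(\mathbf{x})]^T\{\varepsilon[I_n]+\exp_{\mathbb{M}}([\mathbf{G}(\mathbf{x})])\}[\underline L(\mathbf{x})]$, then $\beta=\underline k_1\sqrt{n}(\varepsilon+e^{\beta_G})/(1+\varepsilon)$. (ii) (Square type) If $[\mathbf{K}(\mathbf{x})]=\frac{1}{1+\varepsilon}[\underline L(\mathbf{x})]^T\{\varepsilon[I_n]+[\mathcal{L}([\mathbf{G}(\mathbf{x})])]^T[\mathcal{L}([\mathbf{G}(\mathbf{x})])]\}[\underline L(\mathbf{x})]$, then $\beta=\underline k_1(\sqrt{n}\,\varepsilon+\gamma_0+\gamma_1\beta_G^2)/(1+\varepsilon)$, where $\gamma_0$ and $\gamma_1$ are two positive finite real numbers, and moreover $E\{\beta\}<+\infty$.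
   Context: Let $d,n\ge1$, $D\subset\mathbb{R}^d$ bounded open; $\mathbb{M}_n^+(\mathbb{R})$, $\mathbb{M}_n^S(\mathbb{R})$ are the symmetric positive-definite and symmetric real $n\times n$ matrices; $\|\cdot\|_F$ Frobenius norm; $\langle\cdot,\cdot\rangle_2,\|\cdot\|_2$ Euclidean inner product and norm; for $[H]:D\to\mathbb{M}_n^S(\mathbb{R})$, $\|H\|_\infty=\operatorname{ess\,sup}_{\mathbf{x}\in D}\|H(\mathbf{x})\|_F$. Normalization: $[\underline K]:D\to\mathbb{M}_n^+(\mathbb{R})$ satisfies $\underline k_0\|\mathbf{z}\|_2^2\le\langle[\underline K(\mathbf{x})]\mathbf{z},\mathbf{z}\rangle_2\le n^{-1/2}\widetilde{\underline k}_1\|\mathbf{z}\|_2^2$ for all $\mathbf{x},\mathbf{z}$, with constants $0<\underline k_0<\widetilde{\underline k}_1<\infty$; $\underline k_1=n\widetilde{\underline k}_1$; $[\underline L(\mathbf{x})]$ is upper triangular with $[\underline K]=[\underline L]^T[\underline L]$; $\varepsilon>0$ fixed. $[\mathbf{G}]$ is a second-order random field on $D$ with values in $\mathbb{M}_n^S(\mathbb{R})$, mean $[G_0]$ with $\|G_0\|_\infty<\infty$, square-integrable covariance function $C_{\mathbf{G}}(\mathbf{x},\mathbf{x}')=E\{([\mathbf{G}(\mathbf{x})]-[G_0(\mathbf{x})])\otimes([\mathbf{G}(\mathbf{x}')]-[G_0(\mathbf{x}')])\}$, whose covariance operator has eigenvalues $\sigma_1\ge\sigma_2\ge\dots>0$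 and normalized eigenfunctions $[G_i]$, and Karhunen–Loève expansion $[\mathbf{G}(\mathbf{x})]=[G_0(\mathbf{x})]+\sum_{i\ge1}\sqrt{\sigma_i}[G_i(\mathbf{x})]\eta_i$ with $\{\eta_i\}$ uncorrelated, zero mean, unit variance. $\exp_{\mathbb{M}}$ is the matrix exponential. Square type: for each $a>0$, $h(\cdot;a):\mathbb{R}\to\mathbb{R}^+$ is strictly increasing with $h(g;a)\le c_a+c_hg^2$ for some $0<c_a,c_h<\infty$; for fixed positive $a_1,\dots,a_n$, $\mathcal{L}([G])$ is the upper triangular matrix with $[\mathcal{L}([G])]_{jj'}=[G]_{jj'}$ ($j<j'$) and $[\mathcal{L}([G])]_{jj}=\sqrt{h([G]_{jj};a_j)}$. *)

From HB Require Import structures.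
From mathcomp Require Import all_boot all_order all_algebra.
From mathcomp Require Import all_classical all_reals all_analysis.
Set Implicit Arguments. Unset Strict Implicit. Unset Printing Implicit Defensive.
Import Order.TTheory GRing.Theory Num.Theory.
Import numFieldNormedType.Exports.
Local Open Scope classical_set_scope.
Local Open Scope ring_scope.

Definition frob {R : realType} {n : nat} (A : 'M[R]_n) : R :=
  Num.sqrt (\sum_(i < n) \sum_(j < n) A i j ^+ 2).

Definition quadf {R : realType} {n : nat} (A : 'M[R]_n) (z : 'cV[R]_n) : R :=
  (z^T *m A *m z) 0 0.
Definition sqnorm2 {R : realType} {n : nat} (z : 'cV[R]_n) : R :=
  \sum_(i < n) z i 0 ^+ 2.

Definition sym_mx {R : realType} {n : nat} (A : 'M[R]_n) : Prop := A^T = A.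

Definition upper_tri {R : realType} {n : nat} (A : 'M[R]_n) : Prop :=
  forall i j : 'I_n, (j < i)%N -> A i j = 0.

Definition supnormF {R : realType} {d n : nat} (D : set 'rV[R]_d)
  (H : 'rV[R]_d -> 'M[R]_n) : \bar R :=
  ereal_sup [set (frob (H x))%:E | x in D].

Definition expM {R : realType} {n : nat} (A : 'M[R]_n) : 'M[R]_n :=
  limn (series (fun k : nat => (k`!%:R)^-1 *: A ^+ k)).

Definition calL {R : realType} {n : nat} (h : R -> R -> R) (a : 'I_n -> R)
  (G : 'M[R]_n) : 'M[R]_n :=
  \matrix_(j, j') if (j < j')%N then G j j'
                  else if j == j' then Num.sqrt (h (a j) (G j j)) else 0.

(* beta_G(w) = ||G_0||_oo + sum_{i>=1} sqrt(sigma_i) ||G_i||_oo |eta_i(w)|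
   (indices of the series shifted to start at 0) *)
Definition betaG {R : realType} {d n : nat} {T : Type} (D : set 'rV[R]_d)
  (G0 : 'rV[R]_d -> 'M[R]_n) (sigma : nat -> R) (Gi : nat -> 'rV[R]_d -> 'M[R]_n)
  (eta : nat -> T -> R) (w : T) : \bar R :=
  (supnormF D G0 +
   \sum_(0 <= i <oo) ((Num.sqrt (sigma i))%:E * supnormF D (Gi i) * (`|eta i w|)%:E))%E.

From HB Require Import structures.
From mathcomp Require Import all_boot all_order all_algebra.
From mathcomp Require Import all_classical all_reals all_analysis.
From mathcomp Require Import ring lra measurable_realfun.
Import Order.TTheory GRing.Theory Num.Theory.
Import numFieldNormedType.Exports.
Local Open Scope classical_set_scope.
Local Open Scope ring_scope.

(* The Karhunen-Loeve partial sums of [G(x)] have Frobenius norm at most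
   [betaG], uniformly in [x], hence so does their a.s. limit [G(x)].  The
   Frobenius norm is submultiplicative, so [||K(x)||_F] is at most
   [||L_(x)||_F^2 ||eps I + M||_F / (1 + eps)], where
   [||L_(x)||_F^2 = tr K_(x) <= sqrt n kt1], while
   [||exp_M G||_F <= sqrt n exp ||G||_F] for the exponential type and
   [||calL(G)||_F^2 <= gamma0 + gamma1 ||G||_F^2] (quadratic growth of [h])
   for the square type.  Finally, with [c_i = sqrt sigma_i ||G_i||_oo] and
   [Q = sum c_i eta_i^2], Cauchy-Schwarz gives
   [betaG <= ||G_0||_oo + sqrt ((sum c_i) Q)], and [E Q = sum c_i < +oo]
   since [E eta_i^2 = 1]; so [betaG] is a.s. finite and [E betaG^2 < +oo]. *)

Lemma cauchy_schwarz_sum {R : realDomainType} (I : finType) (a b : I -> R) :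
  (\sum_i a i * b i) ^+ 2 <= (\sum_i a i ^+ 2) * (\sum_i b i ^+ 2).
Proof.
set A := \sum_i a i ^+ 2; set B := \sum_i b i ^+ 2; set S := \sum_i a i * b i.
(* Lagrange's identity: [2 (A B - S^2)] is the sum of the squares [(a_i b_j - a_j b_i)^2]. *)
have lagrange i : \sum_j (a i * b j - a j * b i) ^+ 2 =
    a i ^+ 2 * B + b i ^+ 2 * A - 2 * (a i * b i) * S.
  rewrite (eq_bigr (fun j => a i ^+ 2 * b j ^+ 2 + b i ^+ 2 * a j ^+ 2
    - 2 * (a i * b i) * (a j * b j))); last by move=> j _; ring.
  by rewrite sumrB big_split /= -!mulr_sumr.
have : 0 <= \sum_i \sum_j (a i * b j - a j * b i) ^+ 2.
  by apply: sumr_ge0 => i _; apply: sumr_ge0 => j _; exact: sqr_ge0.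
rewrite (eq_bigr _ (fun i _ => lagrange i)) sumrB big_split /=.
rewrite -!mulr_suml -mulr_sumr -/A -/B -/S; lra.
Qed.

Lemma cauchy_schwarz_sum_weighted {R : rcfType} (I : finType) (c x : I -> R) :
  (forall i, 0 <= c i) -> (\sum_i c i * x i) ^+ 2 <= (\sum_i c i) * (\sum_i c i * x i ^+ 2).
Proof.
move=> c_ge0; move: (cauchy_schwarz_sum _ (fun i => Num.sqrt (c i)) (fun i => Num.sqrt (c i) * x i)).
have -> : \sum_i Num.sqrt (c i) * (Num.sqrt (c i) * x i) = \sum_i c i * x i.
  by apply: eq_bigr => i _; rewrite mulrA -expr2 sqr_sqrtr.
have -> : \sum_i Num.sqrt (c i) ^+ 2 = \sum_i c i.
  by apply: eq_bigr => i _; rewrite sqr_sqrtr.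
have -> // : \sum_i (Num.sqrt (c i) * x i) ^+ 2 = \sum_i c i * x i ^+ 2.
by apply: eq_bigr => i _; rewrite exprMn sqr_sqrtr.
Qed.

Section Frobenius.
Context {R : realType} {n : nat}.
Implicit Types (A B : 'M[R]_n) (c : R).

Lemma frob_ge0 A : 0 <= frob A.
Proof. exact: sqrtr_ge0. Qed.

Lemma frob_sqr A : frob A ^+ 2 = \sum_i \sum_j A i j ^+ 2.
Proof.
by rewrite sqr_sqrtr //; apply: sumr_ge0 => i _; apply: sumr_ge0 => j _; exact: sqr_ge0.
Qed.

Lemma frob_le_sqr A c : 0 <= c -> frob A ^+ 2 <= c ^+ 2 -> frob A <= c.
Proof. by move=> c_ge0; rewrite ler_pXn2r // nnegrE frob_ge0. Qed.

Lemma entry_le_frob A i j : `|A i j| <= frob A.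
Proof.
rewrite -(ler_pXn2r (isT : 0 < 2)%N) ?nnegrE ?frob_ge0 // real_normK ?num_real //.
rewrite frob_sqr (bigD1 i) //= (bigD1 j) //= -addrA lerDl.
apply: addr_ge0; apply: sumr_ge0 => k _; first exact: sqr_ge0.
by apply: sumr_ge0 => l _; exact: sqr_ge0.
Qed.

Lemma entry_sqr_le_frob A i j : A i j ^+ 2 <= frob A ^+ 2.
Proof.
rewrite -[A i j ^+ 2]real_normK ?num_real //.
by apply: lerXn2r; rewrite ?nnegrE ?frob_ge0 ?entry_le_frob.
Qed.

Lemma frob_tr A : frob A^T = frob A.
Proof.
rewrite /frob exchange_big; congr Num.sqrt.
by apply: eq_bigr => i _; apply: eq_bigr => j _; rewrite mxE.
Qed.

Lemma frob_mulmx A B : frob (A *m B) <= frob A * frob B.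
Proof.
apply: frob_le_sqr; first by rewrite mulr_ge0 ?frob_ge0.
have frobB : frob B ^+ 2 = \sum_j \sum_k B k j ^+ 2 by rewrite frob_sqr exchange_big.
rewrite exprMn frobB !frob_sqr mulr_suml; apply: ler_sum => i _.
rewrite mulr_sumr; apply: ler_sum => j _; rewrite mxE.
exact: cauchy_schwarz_sum.
Qed.


Lemma frob_add A B : frob (A + B) <= frob A + frob B.
Proof.
apply: frob_le_sqr; first by rewrite addr_ge0 ?frob_ge0.
have cs : \sum_(p : 'I_n * 'I_n) A p.1 p.2 * B p.1 p.2 <= frob A * frob B.
  apply: le_trans (ler_norm _) _.
  rewrite -(ler_pXn2r (isT : 0 < 2)%N) ?nnegrE ?mulr_ge0 ?frob_ge0 //.
  by rewrite real_normK ?num_real // exprMn !frob_sqr !pair_big cauchy_schwarz_sum.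
rewrite sqrrD !frob_sqr !pair_big.
rewrite (eq_bigr (fun p => A p.1 p.2 ^+ 2 + B p.1 p.2 ^+ 2 + 2 * (A p.1 p.2 * B p.1 p.2)));
  last by move=> p _; rewrite mxE; ring.
rewrite !big_split /= -mulr_sumr; lra.
Qed.

Lemma frob_scale c A : frob (c *: A) = `|c| * frob A.
Proof.
rewrite /frob -sqrtr_sqr -sqrtrM ?sqr_ge0 // mulr_sumr; congr Num.sqrt.
by apply: eq_bigr => i _; rewrite mulr_sumr; apply: eq_bigr => j _; rewrite mxE exprMn.
Qed.

Lemma frob_scalar_mx c : frob (c%:M : 'M[R]_n) = `|c| * Num.sqrt n%:R.
Proof.
rewrite -scalemx1 frob_scale /frob; congr (_ * Num.sqrt _).
rewrite (eq_bigr (fun _ => 1)) ?sumr_const ?card_ord // => i _.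
rewrite (bigD1 i) //= big1 ?addr0; first by rewrite mxE eqxx expr1n.
by move=> j /negPf ji; rewrite mxE eq_sym ji /= expr0n.
Qed.

Lemma frob_sum (I : Type) (r : seq I) (F : I -> 'M[R]_n) :
  frob (\sum_(i <- r) F i) <= \sum_(i <- r) frob (F i).
Proof.
elim: r => [|x r IH]; last by rewrite !big_cons (le_trans (frob_add _ _)) // lerD2l.
by rewrite !big_nil -(scale0r (0 : 'M[R]_n)) frob_scale normr0 mul0r.
Qed.

Lemma frob_exprn A k : frob (A ^+ k) <= Num.sqrt n%:R * frob A ^+ k.
Proof.
elim: k => [|k IH]; first by rewrite !expr0 -idmxE frob_scalar_mx normr1 mul1r mulr1.
rewrite !exprSr -mulmxE (le_trans (frob_mulmx _ _)) // mulrA.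
by apply: ler_wpM2r; first exact: frob_ge0.
Qed.

Lemma mxnorm_le_frob A : `|A| <= frob A.
Proof.
rewrite [leLHS]/Num.Def.normr /= mx_normrE.
by apply: bigmax_le => [|ij _]; [exact: frob_ge0 | exact: entry_le_frob].
Qed.

Lemma frob_le_mxnorm A : frob A <= n%:R * `|A|.
Proof.
apply: frob_le_sqr; first by rewrite mulr_ge0 ?normr_ge0.
have -> : (n%:R * `|A|) ^+ 2 = \sum_(i < n) \sum_(j < n) `|A| ^+ 2.
  by rewrite !sumr_const card_ord -mulrnA mulnn exprMn -natrX mulr_natl.
rewrite frob_sqr; apply: ler_sum => i _; apply: ler_sum => j _.
rewrite -[A i j ^+ 2]real_normK ?num_real //.
apply: lerXn2r; rewrite ?nnegrE ?normr_ge0 //.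
rewrite [leRHS]/Num.Def.normr /= mx_normrE.
exact: (le_bigmax _ (fun ij : 'I_n * 'I_n => `|A ij.1 ij.2|) (i, j)).
Qed.

Lemma frob_cvg_le {S : nat -> 'M[R]_n} {L c} :
  S @ \oo --> L -> (forall N, frob (S N) <= c) -> frob L <= c.
Proof.
move=> SL Sc; apply/ler_addgt0Pr => e e_gt0.
have e'_gt0 : 0 < e / (n%:R + 1) by rewrite divr_gt0 // ltr_wpDl.
move/cvgrPdist_lt: SL => /(_ _ e'_gt0) [N _ /(_ N (leqnn N)) /= SNL].
rewrite -(subrK (S N) L) addrC; apply: le_trans (frob_add _ _) _; apply: lerD => //.
apply: le_trans (frob_le_mxnorm _) _.
apply: le_trans (_ : n%:R * (e / (n%:R + 1)) <= _); first by rewrite ler_wpM2l // ltW.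
by rewrite mulrA ler_pdivrMr ?ltr_wpDl // mulrDr mulr1 mulrC lerDl ltW.
Qed.

End Frobenius.

Lemma sum_exp_coeff_le_expR {R : realType} (x : R) N :
  0 <= x -> \sum_(0 <= k < N) exp_coeff x k <= expR x.
Proof.
move=> x_ge0; rewrite expRE /pseries -exp_coeffE.
apply: (nondecreasing_cvgn_le _ (is_cvg_series_exp_coeff x) N).
by apply: nondecreasing_series => k _ _; exact: exp_coeff_ge0.
Qed.

Section MatrixExponential.
Context {R : realType} {n : nat}.
(* [normed_cvg] needs matrices as a complete normed module over [R]. *)
#[local] HB.instance Definition _ := NormedModule.on 'M[R]_n.

Lemma frob_expM_le (A : 'M[R]_n) : frob (expM A) <= Num.sqrt n%:R * expR (frob A).
Proof.
set u := fun k : nat => (k`!%:R)^-1 *: A ^+ k.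
have u_le k : frob (u k) <= Num.sqrt n%:R * exp_coeff (frob A) k.
  rewrite frob_scale ger0_norm ?invr_ge0 // /exp_coeff /= mulrA mulrC.
  by apply: ler_wpM2r; [rewrite invr_ge0 | exact: frob_exprn].
have cvg_u : cvgn (series u).
  apply: normed_cvg; apply: (series_le_cvg (v_ := Num.sqrt n%:R *: exp_coeff (frob A))).
  - by move=> k; exact: normr_ge0.
  - by move=> k; rewrite /= mulr_ge0 ?sqrtr_ge0 ?exp_coeff_ge0 ?frob_ge0.
  - by move=> k; exact: le_trans (mxnorm_le_frob _) (u_le k).
  - exact/is_cvg_seriesZ/is_cvg_series_exp_coeff.
apply: (@frob_cvg_le R n (series u) (expM A) _ cvg_u) => N.
apply: le_trans (frob_sum _ _ u) _.
apply: le_trans (ler_sum _ (fun k _ => u_le k)) _.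
by rewrite -mulr_sumr ler_wpM2l ?sqrtr_ge0 ?sum_exp_coeff_le_expR ?frob_ge0.
Qed.

End MatrixExponential.

Section Congruence.
Context {R : realType} {n : nat}.
Implicit Types (K L M C G : 'M[R]_n).

Lemma quadf_delta K j : quadf K (delta_mx j 0) = K j j.
Proof. by rewrite /quadf trmx_delta -rowE -colE !mxE. Qed.

Lemma sqnorm2_delta j : sqnorm2 (delta_mx j 0 : 'cV[R]_n) = 1.
Proof.
rewrite /sqnorm2 (bigD1 j) //= big1 ?addr0; first by rewrite mxE !eqxx expr1n.
by move=> i /negPf ij; rewrite mxE ij /= expr0n.
Qed.

Lemma mxtrace_le_quadf_bound {K c} :
  (forall z, quadf K z <= c * sqnorm2 z) -> \tr K <= n%:R * c.
Proof.
move=> Kc; have Kjj j : K j j <= c.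
  by have := Kc (delta_mx j 0); rewrite quadf_delta sqnorm2_delta mulr1.
apply: le_trans (ler_sum _ (fun j _ => Kjj j)) _.
by rewrite sumr_const card_ord mulr_natl.
Qed.

Lemma frob_sqr_mxtrace L : frob L ^+ 2 = \tr (L^T *m L).
Proof.
rewrite frob_sqr exchange_big; apply: eq_bigr => j _.
by rewrite mxE; apply: eq_bigr => k _; rewrite mxE expr2.
Qed.

Lemma frob_congr_le L M : frob (L^T *m M *m L) <= frob L ^+ 2 * frob M.
Proof.
apply: le_trans (frob_mulmx _ _) _.
rewrite expr2 mulrAC; apply: ler_wpM2r; first exact: frob_ge0.
by apply: le_trans (frob_mulmx _ _) _; rewrite frob_tr.
Qed.

(* [||L||_F^2 = tr K <= sqrt n kt1]; the factor [sqrt n <= n] is absorbed into [n kt1]. *)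
Lemma frob_normalized_congr_le {K L M kt1 eps m} :
  0 <= kt1 -> 0 <= eps ->
  (forall z, quadf K z <= (Num.sqrt n%:R)^-1 * kt1 * sqnorm2 z) -> K = L^T *m L ->
  frob M <= m ->
  frob ((1 + eps)^-1 *: (L^T *m M *m L)) <= n%:R * kt1 * m / (1 + eps).
Proof.
move=> kt1_ge0 eps_ge0 Kq KL Mm.
have m_ge0 : 0 <= m := le_trans (frob_ge0 M) Mm.
set s := Num.sqrt (n%:R : R).
have n_sqr : n%:R = s ^+ 2 by rewrite sqr_sqrtr ?ler0n.
have s_le_n : s <= n%:R.
  have [n0|n_gt0] := posnP n; first by rewrite /s n0 sqrtr0.
  by rewrite n_sqr expr2 ler_peMl ?sqrtr_ge0 // -sqrtr1 ler_wsqrtr // ler1n.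
have L2 : frob L ^+ 2 <= s * kt1.
  rewrite frob_sqr_mxtrace -KL; apply: le_trans (mxtrace_le_quadf_bound Kq) _.
  rewrite -/s {1}n_sqr expr2 -mulrA.
  by have [s0|s_neq0] := eqVneq s 0; [rewrite s0 !mul0r | rewrite mulVKf].
rewrite frob_scale ger0_norm ?invr_ge0 ?addr_ge0 // mulrC.
apply: ler_wpM2r; first by rewrite invr_ge0 addr_ge0.
apply: le_trans (frob_congr_le L M) _.
apply: le_trans (ler_pM (sqr_ge0 _) (frob_ge0 M) L2 Mm) _.
by rewrite -!mulrA; apply: ler_wpM2r; rewrite ?mulr_ge0.
Qed.

Lemma frob_exponential_type_le {K L G kt1 eps b} :
  0 <= kt1 -> 0 <= eps ->
  (forall z, quadf K z <= (Num.sqrt n%:R)^-1 * kt1 * sqnorm2 z) -> K = L^T *m L ->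
  frob G <= b ->
  frob ((1 + eps)^-1 *: (L^T *m (eps%:M + expM G) *m L))
    <= n%:R * kt1 * Num.sqrt n%:R * (eps + expR b) / (1 + eps).
Proof.
move=> kt1_ge0 eps_ge0 Kq KL Gb.
rewrite -(mulrA _ (Num.sqrt _)); apply: frob_normalized_congr_le => //.
apply: le_trans (frob_add _ _) _.
rewrite frob_scalar_mx ger0_norm // mulrDr [eps * _]mulrC lerD2l.
apply: le_trans (frob_expM_le G) _.
by rewrite ler_wpM2l ?sqrtr_ge0 // ler_expR.
Qed.

Lemma frob_square_type_le {K L C G kt1 eps b g0 g1} :
  0 <= kt1 -> 0 <= eps -> 0 <= g1 ->
  (forall z, quadf K z <= (Num.sqrt n%:R)^-1 * kt1 * sqnorm2 z) -> K = L^T *m L ->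
  frob C ^+ 2 <= g0 + g1 * frob G ^+ 2 -> frob G <= b ->
  frob ((1 + eps)^-1 *: (L^T *m (eps%:M + C^T *m C) *m L))
    <= n%:R * kt1 * (Num.sqrt n%:R * eps + g0 + g1 * b ^+ 2) / (1 + eps).
Proof.
move=> kt1_ge0 eps_ge0 g1_ge0 Kq KL CG Gb.
apply: frob_normalized_congr_le => //.
apply: le_trans (frob_add _ _) _.
rewrite frob_scalar_mx ger0_norm // mulrC -addrA lerD2l.
apply: le_trans (frob_mulmx _ _) _; rewrite frob_tr -expr2.
apply: (le_trans CG); rewrite lerD2l; apply: ler_wpM2l => //.
by apply: lerXn2r; rewrite ?nnegrE ?frob_ge0 ?(le_trans (frob_ge0 G)).
Qed.

End Congruence.

Section SquareType.
Context {R : realType} {n : nat}.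
Context {h : R -> R -> R} {a : 'I_n -> R}.

Lemma frob_calL_sqr_le (G : 'M[R]_n) {ca ch : 'I_n -> R} :
  (forall j g, 0 <= h (a j) g) -> (forall j g, h (a j) g <= ca j + ch j * g ^+ 2) ->
  (forall j, 0 <= ch j) ->
  frob (calL h a G) ^+ 2 <= \sum_j ca j + (1 + \sum_j ch j) * frob G ^+ 2.
Proof.
move=> h_ge0 h_le ch_ge0.
have entry j j' : calL h a G j j' ^+ 2 <=
    G j j' ^+ 2 + (if j == j' then ca j + ch j * frob G ^+ 2 else 0).
  rewrite mxE; case: ltnP => [jj'|_].
    have /negPf -> : j != j' by apply: contraTneq jj' => ->; rewrite ltnn.
    by rewrite addr0.
  case: eqP => [<-|_]; last by rewrite expr0n addr0 sqr_ge0.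
  rewrite sqr_sqrtr //; apply: (le_trans (h_le j _)).
  rewrite -[leLHS]add0r; apply: lerD; first exact: sqr_ge0.
  by rewrite lerD2l; apply: ler_wpM2l; [exact: ch_ge0 | exact: entry_sqr_le_frob].
rewrite [leLHS]frob_sqr.
apply: le_trans (ler_sum _ (fun j _ => ler_sum _ (fun j' _ => entry j j'))) _.
have diag j : \sum_j' (if j == j' then ca j + ch j * frob G ^+ 2 else 0) =
    ca j + ch j * frob G ^+ 2.
  by rewrite (bigD1 j) //= eqxx big1 ?addr0 // => k; rewrite eq_sym => /negPf ->.
under eq_bigr do rewrite big_split /= diag.
rewrite big_split /= -(frob_sqr G) big_split /= -mulr_suml; lra.
Qed.

Lemma calL_sqr_quadratic_bound :
  (forall j, 0 < a j) -> (forall a0, 0 < a0 -> forall g, 0 < h a0 g) ->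
  (forall a0, 0 < a0 -> exists ca ch, 0 < ca /\ 0 < ch /\
     forall g, h a0 g <= ca + ch * g ^+ 2) ->
  exists g0 g1, 0 < g0 /\ 0 < g1 /\
    forall G : 'M[R]_n, frob (calL h a G) ^+ 2 <= g0 + g1 * frob G ^+ 2.
Proof.
move=> a_gt0 h_gt0 h_sq.
have /fin_all_exists[f f_spec] : forall j, exists p : R * R,
    0 < p.1 /\ 0 < p.2 /\ forall g, h (a j) g <= p.1 + p.2 * g ^+ 2.
  by move=> j; have [ca [ch ?]] := h_sq _ (a_gt0 j); exists (ca, ch).
have ca_ge0 : 0 <= \sum_j (f j).1 by apply: sumr_ge0 => j _; exact: ltW (f_spec j).1.
have ch_ge0 : 0 <= \sum_j (f j).2 by apply: sumr_ge0 => j _; exact: ltW (f_spec j).2.1.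
exists (\sum_j (f j).1 + 1), (1 + \sum_j (f j).2).
split; first lra.
split=> [|G]; first lra.
apply: le_trans (frob_calL_sqr_le G (fun j g => ltW (h_gt0 _ (a_gt0 j) g))
  (fun j => (f_spec j).2.2) (fun j => ltW (f_spec j).2.1)) _.
by rewrite lerD2r lerDl.
Qed.

End SquareType.

Section NonnegativeSeries.
Context {R : realType}.
Implicit Types (u c y : nat -> R).

Lemma fine_nneseries_ge_partial u N : (forall i, 0 <= u i) ->
  (\sum_(i <oo) (u i)%:E)%E \is a fin_num ->
  \sum_(0 <= i < N) u i <= fine (\sum_(i <oo) (u i)%:E)%E.
Proof.
move=> u_ge0 u_fin; rewrite -lee_fin fineK // -sumEFin.
by apply: nneseries_lim_ge => i _ _; rewrite lee_fin.
Qed.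

Lemma nneseries_le_of_partial u M : (forall i, 0 <= u i) ->
  (forall N, \sum_(0 <= i < N) u i <= M) -> (\sum_(i <oo) (u i)%:E <= M%:E)%E.
Proof.
move=> u_ge0 uM; apply: lime_le.
  by apply: is_cvg_nneseries => i _ _; rewrite lee_fin.
by apply: nearW => N; rewrite sumEFin lee_fin.
Qed.

Lemma nneseries_cauchy_schwarz c y : (forall i, 0 <= c i) ->
  (\sum_(i <oo) (c i)%:E)%E \is a fin_num ->
  (\sum_(i <oo) (c i * y i ^+ 2)%:E)%E \is a fin_num ->
  (\sum_(i <oo) (c i * `|y i|)%:E <= (Num.sqrt (fine (\sum_(i <oo) (c i)%:E)
     * fine (\sum_(i <oo) (c i * y i ^+ 2)%:E)))%:E)%E.
Proof.
move=> c_ge0 C_fin Q_fin.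
apply: nneseries_le_of_partial => [i|N]; first by rewrite mulr_ge0.
have partial_ge0 : 0 <= \sum_(0 <= i < N) c i * `|y i|.
  by apply: sumr_ge0 => i _; rewrite mulr_ge0.
rewrite -(ger0_norm partial_ge0) -sqrtr_sqr ler_wsqrtr //.
apply: le_trans (_ : (\sum_(0 <= i < N) c i) * (\sum_(0 <= i < N) c i * y i ^+ 2) <= _).
  rewrite !big_mkord; under [X in _ <= _ * X]eq_bigr do rewrite -real_normK ?num_real //.
  exact: cauchy_schwarz_sum_weighted.
have cy2_ge0 i : 0 <= c i * y i ^+ 2 by rewrite mulr_ge0 ?sqr_ge0.
by apply: ler_pM; rewrite ?fine_nneseries_ge_partial ?sumr_ge0.
Qed.

End NonnegativeSeries.

Section SupNorm.
Context {R : realType} {d n : nat} {D : set 'rV[R]_d}.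
Implicit Types H : 'rV[R]_d -> 'M[R]_n.

Lemma frob_le_supnormF {H x} : D x -> ((frob (H x))%:E <= supnormF D H)%E.
Proof. by move=> Dx; apply: ereal_sup_ubound; exists x. Qed.

Lemma supnormF_ge0 {H x} : D x -> (0 <= supnormF D H)%E.
Proof. by move=> Dx; apply: le_trans _ (frob_le_supnormF (H := H) Dx); rewrite lee_fin frob_ge0. Qed.

Lemma supnormF_fin_num {H x} : D x -> (supnormF D H < +oo)%E -> supnormF D H \is a fin_num.
Proof. by move=> Dx H_lty; rewrite ge0_fin_numE // (supnormF_ge0 Dx). Qed.

Lemma frob_le_fine_supnormF {H x} : D x -> (supnormF D H < +oo)%E ->
  frob (H x) <= fine (supnormF D H).
Proof.
by move=> Dx H_lty; rewrite -lee_fin fineK ?(supnormF_fin_num Dx) ?frob_le_supnormF.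
Qed.

End SupNorm.

Lemma integral_sqr_centered_unit_variance {dT : measure_display} {T : measurableType dT}
    {R : realType} {P : probability T R} {X : {RV P >-> R}} :
  (X : T -> R) \in Lfun P 2%E -> ('E_P[X] = 0)%E -> ('V_P[X] = 1)%E ->
  (\int[P]_w (X w ^+ 2)%:E = 1)%E.
Proof.
move=> X_L2 X_mean X_var; move: (varianceE X_L2).
by rewrite X_var X_mean expeS mul0e sube0 => ->; rewrite unlock exprfctE.
Qed.

Section KarhunenLoeve.
Context {R : realType} {d n : nat} {D : set 'rV[R]_d}.
Context {G0 : 'rV[R]_d -> 'M[R]_n} {sigma : nat -> R} {Gi : nat -> 'rV[R]_d -> 'M[R]_n}.
Context {dT : measure_display} {T : measurableType dT} {P : probability T R}.
Context {eta : nat -> {RV P >-> R}}.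
Hypothesis G0_lty : (supnormF D G0 < +oo)%E.
Hypothesis sigma_gt0 : forall i, 0 < sigma i.
Hypothesis KL_summable :
  (\sum_(0 <= i <oo) ((Num.sqrt (sigma i))%:E * supnormF D (Gi i)) < +oo)%E.
Hypothesis eta_sqr : forall i, (\int[P]_w (eta i w ^+ 2)%:E = 1)%E.

Local Notation bG := (betaG D G0 sigma Gi (fun i => eta i : T -> R)).
Local Notation s0 := (fine (supnormF D G0)).
Local Notation c i := (Num.sqrt (sigma i) * fine (supnormF D (Gi i))).
Local Notation C := (fine (\sum_(i <oo) (c i)%:E)%E).
Local Notation S w := (\sum_(i <oo) (c i * `|eta i w|)%:E)%E.
Local Notation Q w := (\sum_(i <oo) (c i * eta i w ^+ 2)%:E)%E.

Section NonemptyDomain.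
Context {x0 : 'rV[R]_d} (Dx0 : D x0).

Lemma supnormF_Gi_lty i : (supnormF D (Gi i) < +oo)%E.
Proof.
have t_ge0 j : (0 <= (Num.sqrt (sigma j))%:E * supnormF D (Gi j))%E.
  by rewrite mule_ge0 ?lee_fin ?sqrtr_ge0 ?(supnormF_ge0 Dx0).
have ti_lty : ((Num.sqrt (sigma i))%:E * supnormF D (Gi i) < +oo)%E.
  apply: le_lt_trans _ KL_summable.
  apply: le_trans (nneseries_lim_ge i.+1 (fun j _ _ => t_ge0 j)).
  by rewrite big_nat_recr //= leeDr //; apply: sume_ge0 => j _.
rewrite ltNge leye_eq; apply/negP => /eqP Gi_oo.
by move: ti_lty; rewrite Gi_oo gt0_muley ?lte_fin ?sqrtr_gt0 // ltxx.
Qed.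

Lemma KL_weight_ge0 i : 0 <= c i.
Proof. by rewrite mulr_ge0 ?sqrtr_ge0 // fine_ge0 // (supnormF_ge0 Dx0). Qed.

Lemma KL_weightsE :
  (\sum_(i <oo) (c i)%:E = \sum_(0 <= i <oo) (Num.sqrt (sigma i))%:E * supnormF D (Gi i))%E.
Proof.
apply: eq_eseriesr => i _.
by rewrite EFinM fineK // (supnormF_fin_num Dx0) ?supnormF_Gi_lty.
Qed.

Lemma KL_weights_fin_num : (\sum_(i <oo) (c i)%:E)%E \is a fin_num.
Proof.
rewrite ge0_fin_numE; first by rewrite KL_weightsE.
by apply: nneseries_ge0 => i _ _; rewrite lee_fin KL_weight_ge0.
Qed.

Lemma betaGE w : bG w = (s0%:E + S w)%E.
Proof.
rewrite /betaG fineK ?(supnormF_fin_num Dx0) //; congr (_ + _)%E.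
by apply: eq_eseriesr => i _; rewrite !EFinM fineK ?(supnormF_fin_num Dx0) ?supnormF_Gi_lty.
Qed.

Lemma KL_abs_series_le w : Q w \is a fin_num -> (S w <= (Num.sqrt (C * fine (Q w)))%:E)%E.
Proof.
exact: (nneseries_cauchy_schwarz _ (fun i => eta i w) KL_weight_ge0 KL_weights_fin_num).
Qed.

Lemma KL_abs_series_fin_num w : Q w \is a fin_num -> S w \is a fin_num.
Proof.
move=> Qw; rewrite ge0_fin_numE; first exact: le_lt_trans (KL_abs_series_le _ Qw) (ltry _).
by apply: nneseries_ge0 => i _ _; rewrite lee_fin mulr_ge0 ?KL_weight_ge0.
Qed.

Lemma fine_betaG w : Q w \is a fin_num -> fine (bG w) = s0 + fine (S w).
Proof. by move=> Qw; rewrite betaGE -(fineK (KL_abs_series_fin_num _ Qw)) -EFinD. Qed.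

Lemma betaG_lty w : Q w \is a fin_num -> (bG w < +oo)%E.
Proof. by move=> Qw; rewrite betaGE -(fineK (KL_abs_series_fin_num _ Qw)) -EFinD ltry. Qed.

Lemma frob_KL_partial_le x w N : D x -> Q w \is a fin_num ->
  frob (G0 x + \sum_(i < N) (Num.sqrt (sigma i) * eta i w) *: Gi i x) <= fine (bG w).
Proof.
move=> Dx Qw; rewrite fine_betaG //.
apply: le_trans (frob_add _ _) _; apply: lerD; first exact: frob_le_fine_supnormF Dx G0_lty.
apply: le_trans (frob_sum _ _ _) _.
apply: le_trans (_ : \sum_(0 <= i < N) c i * `|eta i w| <= _); last first.
  apply: fine_nneseries_ge_partial (KL_abs_series_fin_num _ Qw) => i.
  by rewrite mulr_ge0 ?KL_weight_ge0.
rewrite big_mkord; apply: ler_sum => i _.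
rewrite frob_scale normrM ger0_norm ?sqrtr_ge0 // mulrAC.
apply: ler_wpM2r; first exact: normr_ge0.
apply: ler_wpM2l; first exact: sqrtr_ge0.
exact: frob_le_fine_supnormF Dx (supnormF_Gi_lty i).
Qed.

Lemma betaG_sqr_le w : Q w \is a fin_num ->
  fine (bG w) ^+ 2 <= 2 * s0 ^+ 2 + 2 * C * fine (Q w).
Proof.
move=> Qw; rewrite fine_betaG //.
have CQ_ge0 : 0 <= C * fine (Q w).
  rewrite mulr_ge0 // fine_ge0 // nneseries_ge0 // => i _ _.
    by rewrite lee_fin KL_weight_ge0.
  by rewrite lee_fin mulr_ge0 ?sqr_ge0 ?KL_weight_ge0.
have S_ge0 : 0 <= fine (S w).
  by rewrite fine_ge0 // nneseries_ge0 // => i _ _; rewrite lee_fin mulr_ge0 ?KL_weight_ge0.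
have S_sqr_le : fine (S w) ^+ 2 <= C * fine (Q w).
  rewrite -(sqr_sqrtr CQ_ge0); apply: lerXn2r; rewrite ?nnegrE ?sqrtr_ge0 //.
  by rewrite -lee_fin fineK ?KL_abs_series_fin_num ?KL_abs_series_le.
have := sqr_ge0 (s0 - fine (S w)); lra.
Qed.

Lemma measurable_KL_term (f : R -> R) i : measurable_fun [set: R] f ->
  measurable_fun [set: T] (fun w => (c i * f (eta i w))%:E).
Proof.
move=> mf; apply/measurable_EFinP.
exact: measurable_funM (measurable_cst _) (measurableT_comp mf (measurable_funPT (eta i))).
Qed.

Lemma measurable_Q : measurable_fun [set: T] (fun w => Q w).
Proof.
apply: ge0_emeasurable_sum => [k w _ _|k _].
  by rewrite lee_fin mulr_ge0 ?sqr_ge0 // KL_weight_ge0.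
exact: (measurable_KL_term _ k (exprn_measurable 2)).
Qed.

Lemma measurable_fine_betaG : measurable_fun [set: T] (fun w => fine (bG w)).
Proof.
under eq_fun do rewrite betaGE.
apply: measurableT_comp (fine_measurable measurableT) _.
apply: emeasurable_funD (measurable_cst _) _.
apply: ge0_emeasurable_sum => [k w _ _|k _].
  by rewrite lee_fin mulr_ge0 ?KL_weight_ge0.
apply: measurable_KL_term; exact: normr_measurable.
Qed.

Lemma integral_Q : (\int[P]_w Q w = \sum_(i <oo) (c i)%:E)%E.
Proof.
rewrite integral_nneseries //; last first.
- by move=> i w _; rewrite lee_fin mulr_ge0 ?sqr_ge0 // KL_weight_ge0.
- by move=> i; exact: (measurable_KL_term _ i (exprn_measurable 2)).
apply: eq_eseriesr => i _; under eq_integral do rewrite EFinM.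
rewrite ge0_integralZl_EFin ?KL_weight_ge0 ?eta_sqr ?mule1 //.
- by move=> w _; rewrite lee_fin sqr_ge0.
- exact/measurable_EFinP/measurable_funX/measurable_funPT.
Qed.

Lemma Q_fin_num_ae : {ae P, forall w, Q w \is a fin_num}.
Proof.
have Q_ge0 w : (0 <= Q w)%E.
  by apply: nneseries_ge0 => i _ _; rewrite lee_fin mulr_ge0 ?sqr_ge0 ?KL_weight_ge0.
have Q_int : P.-integrable [set: T] (fun w => Q w).
  apply/integrableP; split; first exact: measurable_Q.
  under eq_integral do rewrite gee0_abs ?Q_ge0 //.
  by rewrite integral_Q -ge0_fin_numE ?KL_weights_fin_num // nneseries_ge0 // => i _ _;
    rewrite lee_fin KL_weight_ge0.
by have := integrable_ae measurableT Q_int; apply: filterS => w /(_ I).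
Qed.

Lemma nonempty_integral_betaG_sqr_lty (a b : R) : 0 <= a -> 0 <= b ->
  (\int[P]_w (a + b * fine (bG w) ^+ 2)%:E < +oo)%E.
Proof.
move=> a_ge0 b_ge0.
have C_ge0 : 0 <= C by rewrite fine_ge0 // nneseries_ge0 // => i _ _; rewrite lee_fin KL_weight_ge0.
set A := a + b * (2 * s0 ^+ 2); set B := b * (2 * C) + 1.
have A_ge0 : 0 <= A by rewrite addr_ge0 // mulr_ge0 // mulr_ge0 ?sqr_ge0 ?ler0n.
have B_gt0 : 0 < B by rewrite ltr_wpDl ?mulr_ge0.
have Q_ge0 w : (0 <= Q w)%E.
  by apply: nneseries_ge0 => i _ _; rewrite lee_fin mulr_ge0 ?sqr_ge0 ?KL_weight_ge0.
have bound w : ((a + b * fine (bG w) ^+ 2)%:E <= A%:E + B%:E * Q w)%E.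
  have [Qw|] := boolP (Q w \is a fin_num); last first.
    by rewrite ge0_fin_numE // -leNgt leye_eq => /eqP ->; rewrite gt0_muley ?addey ?leey.
  rewrite -(fineK Qw) -EFinM -EFinD lee_fin.
  have q_ge0 : 0 <= fine (Q w) by rewrite fine_ge0.
  have := betaG_sqr_le _ Qw; rewrite /A /B; nra.
have mBQ : measurable_fun [set: T] (fun w => B%:E * Q w)%E.
  exact: measurable_funeM measurable_Q.
have f_ge0 w : [set: T] w -> (0 <= (a + b * fine (bG w) ^+ 2)%:E)%E.
  by move=> _; rewrite lee_fin addr_ge0 // mulr_ge0 // sqr_ge0.
have mf : measurable_fun [set: T] (fun w => (a + b * fine (bG w) ^+ 2)%:E).
  apply/measurable_EFinP; apply: measurable_funD (measurable_cst _) _.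
  exact: measurable_funM (measurable_cst _) (measurable_funX 2 measurable_fine_betaG).
apply: le_lt_trans (ge0_le_integral P measurableT f_ge0 mf
  (emeasurable_funD (measurable_cst _) mBQ) (fun w _ => bound w)) _.
rewrite ge0_integralD // ?integral_cst // ?ge0_integralZl_EFin ?integral_Q ?ltW //.
- have : (A%:E * P [set: T] + B%:E * \sum_(i <oo) (c i)%:E)%E \is a fin_num.
    by rewrite fin_numD !fin_numM ?fin_num_measure ?KL_weights_fin_num.
  by case/fin_numPlt/andP.
- exact: measurable_Q.
- by move=> w _; rewrite mule_ge0 // lee_fin ltW.
Qed.

End NonemptyDomain.

Lemma KL_frob_le_betaG (G : T -> 'M[R]_n) x : D x ->
  {ae P, forall w, (fun N : nat => G0 x + \sum_(i < N) (Num.sqrt (sigma i) * eta i w) *: Gi i x)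
     @ \oo --> G w} ->
  {ae P, forall w, (bG w < +oo)%E /\ frob (G w) <= fine (bG w)}.
Proof.
move=> Dx; apply: filterS2 (Q_fin_num_ae Dx) => w Qw G_lim.
split; first exact: (betaG_lty Dx _ Qw).
by apply: (frob_cvg_le G_lim) => N; exact: (frob_KL_partial_le Dx _ _ _ Dx Qw).
Qed.

Lemma integral_betaG_sqr_lty (a b : R) : 0 <= a -> 0 <= b ->
  (\int[P]_w (a + b * fine (bG w) ^+ 2)%:E < +oo)%E.
Proof.
move=> a_ge0 b_ge0; have [[x Dx]|D_empty] := pselect (exists x, D x).
  exact: (nonempty_integral_betaG_sqr_lty Dx _ _ a_ge0 b_ge0).
(* On an empty domain [supnormF] is [-oo], hence so is [betaG], and [fine] maps it to [0]. *)
have D0 : D = set0 by apply/seteqP; split => x // Dx; apply: D_empty; exists x.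
have -> : (fun w => (a + b * fine (bG w) ^+ 2)%:E) = cst (a + b * 0 ^+ 2)%:E.
  by apply/funext => w; rewrite /betaG /supnormF D0 image_set0 ereal_sup0 addNye.
have : ((a + b * 0 ^+ 2)%:E * P [set: T])%E \is a fin_num by rewrite fin_numM ?fin_num_measure.
by rewrite integral_cst // => /fin_numPlt/andP[].
Qed.

End KarhunenLoeve.
Theorem proposition3
  (R : realType) (d n : nat) (D : set 'rV[R]_d)
  (Kb Lb : 'rV[R]_d -> 'M[R]_n) (k0 kt1 eps : R)
  (dT : measure_display) (T : measurableType dT) (P : probability T R)
  (G0 : 'rV[R]_d -> 'M[R]_n) (sigma : nat -> R)
  (Gi : nat -> 'rV[R]_d -> 'M[R]_n) (eta : nat -> {RV P >-> R})
  (G : 'rV[R]_d -> T -> 'M[R]_n) :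
  (0 < d)%N -> (0 < n)%N -> open D -> bounded_set D ->
  (* normalization of the deterministic mean model [K_] = [L_]^T [L_] *)
  0 < k0 -> k0 < kt1 ->
  (forall x, D x -> sym_mx (Kb x)) ->
  (forall x (z : 'cV[R]_n), D x ->
      k0 * sqnorm2 z <= quadf (Kb x) z /\
      quadf (Kb x) z <= (Num.sqrt n%:R)^-1 * kt1 * sqnorm2 z) ->
  (forall x, D x -> upper_tri (Lb x) /\ Kb x = (Lb x)^T *m Lb x) ->
  0 < eps ->
  (* the random field [G] and its Karhunen-Loeve expansion *)
  (forall x, D x -> sym_mx (G0 x)) ->
  (supnormF D G0 < +oo)%E ->
  (forall i, 0 < sigma i) -> (forall i, sigma i.+1 <= sigma i) ->
  (forall i x, D x -> sym_mx (Gi i x)) ->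
  (forall i, (eta i : T -> R) \in Lfun P 2%E) ->
  (forall i, ('E_P[eta i] = 0)%E) ->
  (forall i, ('V_P[eta i] = 1)%E) ->
  (forall i j, i <> j -> covariance P (eta i) (eta j) = 0%E) ->
  (forall x, D x -> {ae P, forall w,
      (fun N : nat => G0 x + \sum_(i < N) (Num.sqrt (sigma i) * eta i w) *: Gi i x)
        @ \oo --> G x w}) ->
  (* summability assumption *)
  (\sum_(0 <= i <oo) ((Num.sqrt (sigma i))%:E * supnormF D (Gi i)) < +oo)%E ->
  let k1 := n%:R * kt1 in
  let bG := betaG D G0 sigma Gi (fun i => (eta i : T -> R)) in
  (* (i) exponential type *)
  (forall x, D x -> {ae P, forall w,
      (bG w < +oo)%E /\
      frob ((1 + eps)^-1 *: ((Lb x)^T *m (eps%:M + expM (G x w)) *m Lb x))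
        <= k1 * Num.sqrt n%:R * (eps + expR (fine (bG w))) / (1 + eps)})
  /\
  (* (ii) square type *)
  (forall (h : R -> R -> R) (a : 'I_n -> R),
      (forall j, 0 < a j) ->
      (forall a0, 0 < a0 -> forall g, 0 < h a0 g) ->
      (forall a0, 0 < a0 -> forall g g', g < g' -> h a0 g < h a0 g') ->
      (forall a0, 0 < a0 -> exists ca ch, 0 < ca /\ 0 < ch /\
                                  forall g, h a0 g <= ca + ch * g ^+ 2) ->
      exists gamma0 gamma1 : R, 0 < gamma0 /\ 0 < gamma1 /\
        let beta := fun w => k1 * (Num.sqrt n%:R * eps + gamma0
                                   + gamma1 * fine (bG w) ^+ 2) / (1 + eps) in
        (forall x, D x -> {ae P, forall w,
           (bG w < +oo)%E /\
           frob ((1 + eps)^-1 *: ((Lb x)^T *m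
                 (eps%:M + (calL h a (G x w))^T *m calL h a (G x w)) *m Lb x))
             <= beta w}) /\
        (\int[P]_w (beta w)%:E < +oo)%E).
Proof.
move=> _ _ _ _ k0_gt0 k0_lt_kt1 _ Kb_bounds Lb_chol eps_gt0 _ G0_lty sigma_gt0 _ _
  eta_L2 eta_mean eta_var _ KL_cvg KL_sum k1 bG.
have kt1_ge0 : 0 <= kt1 by rewrite ltW // (lt_trans k0_gt0).
have eps_ge0 := ltW eps_gt0.
have eta_sqr i := integral_sqr_centered_unit_variance (eta_L2 i) (eta_mean i) (eta_var i).
have frob_G x : D x -> {ae P, forall w, (bG w < +oo)%E /\ frob (G x w) <= fine (bG w)}.
  by move=> Dx; exact: KL_frob_le_betaG G0_lty sigma_gt0 KL_sum eta_sqr _ _ Dx (KL_cvg x Dx).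
split=> [x Dx | h a a_gt0 h_gt0 _ h_sq].
  apply: filterS (frob_G x Dx) => w [bG_lty Gw]; split => //.
  exact: frob_exponential_type_le kt1_ge0 eps_ge0 (fun z => (Kb_bounds x z Dx).2) (Lb_chol x Dx).2 Gw.
have [g0 [g1 [g0_gt0 [g1_gt0 calL_le]]]] := calL_sqr_quadratic_bound a_gt0 h_gt0 h_sq.
exists g0, g1; do 2 split => //; move=> beta; split=> [x Dx|].
  apply: filterS (frob_G x Dx) => w [bG_lty Gw]; split => //.
  exact: frob_square_type_le kt1_ge0 eps_ge0 (ltW g1_gt0) (fun z => (Kb_bounds x z Dx).2)
    (Lb_chol x Dx).2 (calL_le _) Gw.
have k1_ge0 : 0 <= k1 by rewrite mulr_ge0.
have -> : (fun w => (beta w)%:E) = (fun w =>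
    (k1 * (Num.sqrt n%:R * eps + g0) / (1 + eps) + k1 * g1 / (1 + eps) * fine (bG w) ^+ 2)%:E).
  by apply/funext => w; rewrite /beta; congr EFin; ring.
have e_ge0 : 0 <= (1 + eps)^-1 by rewrite invr_ge0; exact: addr_ge0 ler01 eps_ge0.
have X_ge0 : 0 <= Num.sqrt n%:R * eps + g0.
  exact: addr_ge0 (mulr_ge0 (sqrtr_ge0 _) eps_ge0) (ltW g0_gt0).
apply: integral_betaG_sqr_lty G0_lty sigma_gt0 KL_sum eta_sqr _ _ _ _.
- exact: mulr_ge0 (mulr_ge0 k1_ge0 X_ge0) e_ge0.
- exact: mulr_ge0 (mulr_ge0 k1_ge0 (ltW g1_gt0)) e_ge0.
Qed.
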